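(* Let $X$ be a topological space, $(Z,d)$ a metric space, $f_n:X\to Z$ ($n\in\mathbb N$) quasicontinuous mappings and $f:X\to Z$ a mapping such that for each $x\in X$, $f(x)$ is a cluster point of $(f_n(x))_{n\in\mathbb N}$. Then for each $n\in\mathbb N$ the set-valued mapping $X\ni x\mapsto\{f_m(x):m\ge n\}\cup\{f(x)\}\in 2^Z$ is lower quasicontinuous.
   Context: $2^Z$ is the set of nonempty subsets of $Z$. A mapping $g:X\to Z$ is quasicontinuous if for each $a\in X$, each neighborhood $U$ of $a$ and each neighborhood $W$ of $g(a)$ there is an open $O$ with $\emptyset\ne O\subset U$ and $g(O)\subset W$. A set-valued $F:X\to 2^Z$ is lower quasicontinuous if for each $x_0\in X$, each neighborhood $U$ of $x_0$ and each open $W\subset Z$ with $F(x_0)\cap W\ne\emptyset$, there is an open $O$ with $\emptyset\ne O\subset U$ and $F(x)\cap W\ne\emptyset$ for all $x\in O$. *)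

From Stdlib Require Import Reals.
Open Scope R_scope.

Record TopSpace := {
  tcarrier :> Type;
  is_open : (tcarrier -> Prop) -> Prop;
  open_full : is_open (fun _ => True);
  open_inter : forall U V, is_open U -> is_open V -> is_open (fun x => U x /\ V x);
  open_union : forall (I : Type) (U : I -> tcarrier -> Prop),
      (forall i, is_open (U i)) -> is_open (fun x => exists i, U i x)
}.

Record MetricSpace := {
  mcarrier :> Type;
  dist : mcarrier -> mcarrier -> R;
  dist_nonneg : forall x y, 0 <= dist x y;
  dist_eq0 : forall x y, dist x y = 0 <-> x = y;
  dist_sym : forall x y, dist x y = dist y x;
  dist_tri : forall x y z, dist x z <= dist x y + dist y z
}.

Definition subset {T : Type} (A B : T -> Prop) : Prop := forall x, A x -> B x.

Definition tnbhd {X : TopSpace} (a : X) (U : X -> Prop) : Prop :=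
  exists O, is_open X O /\ O a /\ subset O U.

Definition ball {Z : MetricSpace} (z : Z) (r : R) : Z -> Prop :=
  fun w => dist Z z w < r.

Definition mopen {Z : MetricSpace} (W : Z -> Prop) : Prop :=
  forall z, W z -> exists r, 0 < r /\ subset (ball z r) W.

Definition mnbhd {Z : MetricSpace} (z : Z) (W : Z -> Prop) : Prop :=
  exists O, mopen O /\ O z /\ subset O W.

Definition quasicontinuous {X : TopSpace} {Z : MetricSpace} (g : X -> Z) : Prop :=
  forall (a : X) (U : X -> Prop) (W : Z -> Prop),
    tnbhd a U -> mnbhd (g a) W ->
    exists O : X -> Prop, is_open X O /\ (exists x, O x) /\ subset O U /\
      (forall x, O x -> W (g x)).

Definition nonempty_valued {X : TopSpace} {Z : MetricSpace} (F : X -> Z -> Prop) : Prop :=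
  forall x, exists z, F x z.

Definition lower_quasicontinuous {X : TopSpace} {Z : MetricSpace}
    (F : X -> Z -> Prop) : Prop :=
  forall (x0 : X) (U : X -> Prop) (W : Z -> Prop),
    tnbhd x0 U -> mopen W -> (exists z, F x0 z /\ W z) ->
    exists O : X -> Prop, is_open X O /\ (exists x, O x) /\ subset O U /\
      (forall x, O x -> exists z, F x z /\ W z).

Definition cluster_point {Z : MetricSpace} (s : nat -> Z) (z : Z) : Prop :=
  forall (eps : R) (N : nat), 0 < eps -> exists m, (N <= m)%nat /\ dist Z (s m) z < eps.

Definition tail_map {X : TopSpace} {Z : MetricSpace}
    (fs : nat -> X -> Z) (f : X -> Z) (n : nat) : X -> Z -> Prop :=
  fun x z => (exists m, (n <= m)%nat /\ z = fs m x) \/ z = f x.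

From Pilot Require Import Defs.
From Stdlib Require Import Reals.

(* If an open W meets {f_m(x0) : m >= n} ∪ {f(x0)}, it already contains some
   f_m(x0) with m >= n, since f(x0) is a cluster point of the f_m(x0); the
   quasicontinuity of that single f_m then yields the required open set. *)

Lemma mopen_mnbhd {Z : MetricSpace} (W : Z -> Prop) (z : Z) :
  mopen W -> W z -> mnbhd z W.
Proof.
  intros HW Wz; exists W; repeat split; auto.
  intros w Hw; exact Hw.
Qed.

Lemma cluster_point_mopen {Z : MetricSpace} (s : nat -> Z) (z : Z)
    (W : Z -> Prop) (n : nat) :
  cluster_point s z -> mopen W -> W z ->
  exists m, (n <= m)%nat /\ W (s m).
Proof.
  intros Hcl HW Wz.
  destruct (HW z Wz) as [r [Hr Hball]].
  destruct (Hcl r n Hr) as [m [Hnm Hd]].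
  exists m; split; [exact Hnm |].
  apply Hball; unfold ball; rewrite Defs.dist_sym; exact Hd.
Qed.

Lemma tail_map_mopen {X : TopSpace} {Z : MetricSpace}
    (fs : nat -> X -> Z) (f : X -> Z) (n : nat) (x : X) (W : Z -> Prop) :
  cluster_point (fun m => fs m x) (f x) -> mopen W ->
  (exists z, tail_map fs f n x z /\ W z) ->
  exists m, (n <= m)%nat /\ W (fs m x).
Proof.
  intros Hcl HW [z [[[m [Hnm ->]] | ->] Wz]].
  - exists m; split; assumption.
  - exact (cluster_point_mopen _ _ _ n Hcl HW Wz).
Qed.

Lemma tail_map_nonempty {X : TopSpace} {Z : MetricSpace}
    (fs : nat -> X -> Z) (f : X -> Z) (n : nat) :
  nonempty_valued (tail_map fs f n).
Proof. intros x; exists (f x); right; reflexivity. Qed.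

Lemma tail_map_lower_quasicontinuous {X : TopSpace} {Z : MetricSpace}
    (fs : nat -> X -> Z) (f : X -> Z) (n : nat) :
  (forall m, quasicontinuous (fs m)) ->
  (forall x, cluster_point (fun m => fs m x) (f x)) ->
  lower_quasicontinuous (tail_map fs f n).
Proof.
  intros Hq Hcl x0 U W HU HW Hmeet.
  destruct (tail_map_mopen fs f n x0 W (Hcl x0) HW Hmeet) as [m [Hnm Wm]].
  destruct (Hq m x0 U W HU (mopen_mnbhd W _ HW Wm))
    as [O [HO [Hne [HOU HOW]]]].
  exists O; repeat split; auto.
  intros x Hx; exists (fs m x); split; [left; exists m; auto | auto].
Qed.

Theorem mainTheorem17 (X : TopSpace) (Z : MetricSpace)
  (fs : nat -> X -> Z) (f : X -> Z)
  (Hq : forall n, quasicontinuous (fs n))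
  (Hcl : forall x, cluster_point (fun n => fs n x) (f x)) :
  forall n : nat, nonempty_valued (tail_map fs f n) /\
                  lower_quasicontinuous (tail_map fs f n).
Proof.
  intros n; split.
  - apply tail_map_nonempty.
  - exact (tail_map_lower_quasicontinuous fs f n Hq Hcl).
Qed.
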